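(* Let $C$ be a 2-copula and let $(U,V)$ be a random pair with joint distribution function $C$. Then: (i) $C$ is $I(-1,-1)$ if and only if $C(u,v)\,C(u',v')\ge C(u,v')\,C(u',v)$ for all $u,v,u',v'\in[0,1]$ with $u\le u'$ and $v\le v'$; (ii) $C$ is $I(1,-1)$ if and only if $[v-C(u,v)]\,[v'-C(u',v')]\le [v-C(u',v)]\,[v'-C(u,v')]$ for all $u,v,u',v'\in[0,1]$ with $u\le u'$ and $v\le v'$; (iii) $C$ is $I(-1,1)$ if and only if $[u-C(u,v)]\,[u'-C(u',v')]\le [u'-C(u',v)]\,[u-C(u,v')]$ for all $u,v,u',v'\in[0,1]$ with $u\le u'$ and $v\le v'$; (iv) $C$ is $I(1,1)$ if and only if $\widehat{C}(u,v)\,\widehat{C}(u',v')\ge \widehat{C}(u,v')\,\widehat{C}(u',v)$ for all $u,v,u',v'\in[0,1]$ with $u\le u'$ and $v\le v'$.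
   Context: An $n$-copula is the restriction to $[0,1]^n$ of an $n$-dimensional distribution function whose univariate marginals are uniform on $[0,1]$. For $\alpha=(\alpha_1,\dots,\alpha_n)\in\{-1,1\}^n$ and a random vector $\mathbf X=(X_1,\dots,X_n)$, write $\alpha\mathbf X=(\alpha_1X_1,\dots,\alpha_nX_n)$; inequalities between vectors are componentwise. $\mathbf X$ (or its distribution) is called increasing according to the direction $\alpha$, written $I(\alpha)$, if for every $\mathbf x\in\mathbb R^n$ the map $\mathbf x'\mapsto \mathbb P[\alpha\mathbf X>\mathbf x\mid \alpha\mathbf X>\mathbf x']$ is nondecreasing in $\mathbf x'$, i.e. $\mathbb P[\alpha\mathbf X>\mathbf x\mid \alpha\mathbf X>\mathbf x']\le \mathbb P[\alpha\mathbf X>\mathbf x\mid \alpha\mathbf X>\mathbf x'']$ whenever $\mathbf x'\le\mathbf x''$ and $\mathbb P[\alpha\mathbf X>\mathbf x'']>0$. A copula $C$ is called $I(\alpha)$ if a random vector with distribution function $C$ is $I(\alpha)$. The survival copula of the 2-copula $C$ is $\widehat C(u,v)=\mathbb P[U>1-u,\,V>1-v]=u+v-1+C(1-u,1-v)$. *)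

From HB Require Import structures.
From mathcomp Require Import all_boot all_order all_algebra.
From mathcomp Require Import all_classical all_reals all_analysis.
Set Implicit Arguments. Unset Strict Implicit. Unset Printing Implicit Defensive.
Import Order.TTheory GRing.Theory Num.Theory.
Local Open Scope classical_set_scope.
Local Open Scope ring_scope.

Definition upper_event (T : Type) (R : realType) (X1 X2 : T -> R)
  (a1 a2 : R) (x1 x2 : R) : set T :=
  [set t | x1 < a1 * X1 t /\ x2 < a2 * X2 t].

(* The random pair (X1, X2) is increasing according to the direction
   (a1, a2), I(a1,a2): for every x, the map x' |-> P[aX > x | aX > x'] is
   nondecreasing, i.e. for x' <= x'' with P[aX > x''] > 0,
   P[aX > x | aX > x'] <= P[aX > x | aX > x'']. *)
Definition increasing_dir (d : measure_display) (T : measurableType d)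
  (R : realType) (P : probability T R) (X1 X2 : T -> R) (a1 a2 : R) : Prop :=
  forall x1 x2 y1 y2 z1 z2 : R,
    y1 <= z1 -> y2 <= z2 ->
    0 < fine (P (upper_event X1 X2 a1 a2 z1 z2)) ->
    fine (P (upper_event X1 X2 a1 a2 x1 x2 `&` upper_event X1 X2 a1 a2 y1 y2))
      / fine (P (upper_event X1 X2 a1 a2 y1 y2))
    <=
    fine (P (upper_event X1 X2 a1 a2 x1 x2 `&` upper_event X1 X2 a1 a2 z1 z2))
      / fine (P (upper_event X1 X2 a1 a2 z1 z2)).

Definition survival_copula (R : realType) (C : R -> R -> R) (u v : R) : R :=
  u + v - 1 + C (1 - u) (1 - v).

From HB Require Import structures.
From mathcomp Require Import all_boot all_order all_algebra.
From mathcomp Require Import all_classical all_reals all_analysis.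
From mathcomp Require Import lra.
Import Order.TTheory GRing.Theory Num.Theory.
Local Open Scope classical_set_scope.
Local Open Scope ring_scope.

(* The events [alpha X > x] are closed under intersection, the intersection
   for x and y being the event for the componentwise maximum, so I(alpha)
   says that F(x \/ y) / F(y) is nondecreasing in y, where F is the joint
   survival function of alpha X.  For a nonnegative antitone F this is
   equivalent to F being TP2, F(x) F(y) <= F(x \/ y) F(x /\ y).  As U and V
   are uniform, hence atomless, F(x1, x2) = H(f1 x1, f2 x2) for antitone maps
   f1, f2 of R onto [0, 1] and an explicit expression H in C; TP2 transfers
   through such reparametrisations, and reversing one coordinate of [0, 1]
   turns TP2 into the reversed inequality, which gives the mixed directions. *)

Section TotalPositivity.
Context {R : realFieldType}.
Implicit Types (F H : R -> R -> R) (f h : R -> R).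

Definition tp2 (F : R -> R -> R) := forall x1 x2 y1 y2, x1 <= y1 -> x2 <= y2 ->
  F x1 y2 * F y1 x2 <= F x1 x2 * F y1 y2.

Definition tp2_01 (H : R -> R -> R) := forall u v u' v' : R,
  0 <= u <= 1 -> 0 <= v <= 1 -> 0 <= u' <= 1 -> 0 <= v' <= 1 ->
  u <= u' -> v <= v' -> H u v' * H u' v <= H u v * H u' v'.

Definition rr2_01 (H : R -> R -> R) := forall u v u' v' : R,
  0 <= u <= 1 -> 0 <= v <= 1 -> 0 <= u' <= 1 -> 0 <= v' <= 1 ->
  u <= u' -> v <= v' -> H u v * H u' v' <= H u' v * H u v'.

Definition ratio_nondecreasing (F : R -> R -> R) :=
  forall x1 x2 y1 y2 z1 z2, y1 <= z1 -> y2 <= z2 -> 0 < F z1 z2 ->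
  F (Num.max x1 y1) (Num.max x2 y2) / F y1 y2 <=
  F (Num.max x1 z1) (Num.max x2 z2) / F z1 z2.

Section NonnegAntitone.
Variable F : R -> R -> R.
Hypothesis F_ge0 : forall x1 x2, 0 <= F x1 x2.
Hypothesis F_anti : forall x1 x2 y1 y2, x1 <= y1 -> x2 <= y2 -> F y1 y2 <= F x1 x2.

Lemma tp2_max_min : tp2 F -> forall x1 x2 y1 y2,
  F x1 x2 * F y1 y2 <=
  F (Num.max x1 y1) (Num.max x2 y2) * F (Num.min x1 y1) (Num.min x2 y2).
Proof.
move=> tpF x1 x2 y1 y2.
case: (leP x1 y1) => [le1|/ltW le1]; case: (leP x2 y2) => [le2|/ltW le2].
- by rewrite mulrC.
- by rewrite [X in _ <= X]mulrC; exact: tpF.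
- by rewrite mulrC [X in _ <= X]mulrC tpF.
- by [].
Qed.

Lemma tp2_ratio_nondecreasing : tp2 F -> ratio_nondecreasing F.
Proof.
move=> tpF x1 x2 y1 y2 z1 z2 le1 le2 Fz.
have Fy : 0 < F y1 y2 by exact: lt_le_trans Fz (F_anti _ _ _ _ le1 le2).
rewrite ler_pdivrMr // mulrAC ler_pdivlMr //.
have join_z (a b c : R) : b <= c -> Num.max (Num.max a b) c = Num.max a c.
  by move=> bc; rewrite -maxA (max_r bc).
apply: le_trans (tp2_max_min tpF _ _ z1 z2) _.
rewrite !join_z //; apply: ler_wpM2l => //.
by apply: F_anti; rewrite le_min le_max lexx orbT.
Qed.

Lemma ratio_nondecreasing_tp2 : ratio_nondecreasing F -> tp2 F.
Proof.
move=> rF y1 y2 z1 z2 le1 le2.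
have [->|Fyz] := eqVneq (F y1 z2) 0; first by rewrite mul0r mulr_ge0.
have Fyz_gt0 : 0 < F y1 z2 by rewrite lt_def Fyz F_ge0.
have Fy : 0 < F y1 y2 by exact: lt_le_trans Fyz_gt0 (F_anti _ _ _ _ (lexx y1) le2).
have := rF z1 y2 y1 y2 y1 z2 (lexx y1) le2 Fyz_gt0.
rewrite (max_l le1) (max_r le2) !maxxx.
rewrite ler_pdivrMr // mulrAC ler_pdivlMr //.
by rewrite mulrC [X in _ <= X]mulrC.
Qed.

End NonnegAntitone.

Definition antitone_param (f h : R -> R) :=
  [/\ forall x, 0 <= f x <= 1, {homo f : x y /~ x <= y},
      forall u, 0 <= u <= 1 -> f (h u) = u & {homo h : x y /~ x <= y}].

Lemma tp2_reparam F H f1 h1 f2 h2 :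
  (forall x1 x2, F x1 x2 = H (f1 x1) (f2 x2)) ->
  antitone_param f1 h1 -> antitone_param f2 h2 -> tp2 F <-> tp2_01 H.
Proof.
move=> FE [f1_01 f1_anti h1K h1_anti] [f2_01 f2_anti h2K h2_anti]; split.
  move=> tpF u v u' v' u01 v01 u'01 v'01 le_u le_v.
  have := tpF _ _ _ _ (h1_anti _ _ le_u) (h2_anti _ _ le_v).
  by rewrite !FE !h1K // !h2K // mulrC [X in _ <= X]mulrC.
move=> tpH y1 y2 z1 z2 le1 le2.
have := tpH _ _ _ _ (f1_01 z1) (f2_01 z2) (f1_01 y1) (f2_01 y2)
  (f1_anti _ _ le1) (f2_anti _ _ le2).
by rewrite !FE mulrC [X in _ <= X]mulrC.
Qed.

Lemma unit_interval_flip {u : R} : 0 <= u <= 1 -> 0 <= 1 - u <= 1.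
Proof. by case/andP=> u_ge0 u_le1; rewrite subr_ge0 u_le1 lerBlDr lerDl. Qed.

Lemma tp2_01_flipl H : tp2_01 (fun a v => H (1 - a) v) <-> rr2_01 H.
Proof.
split=> tpH u v u' v' u01 v01 u'01 v'01 le_u le_v;
  have := tpH (1 - u') v (1 - u) v' (unit_interval_flip u'01) v01
    (unit_interval_flip u01) v'01 (lerB (lexx 1) le_u) le_v;
  by rewrite /= ?subKr mulrC.
Qed.

Lemma tp2_01_flipr H : tp2_01 (fun u b => H u (1 - b)) <-> rr2_01 H.
Proof.
split=> tpH u v u' v' u01 v01 u'01 v'01 le_u le_v;
  have := tpH u (1 - v') u' (1 - v) u01 (unit_interval_flip v'01) u'01
    (unit_interval_flip v01) le_u (lerB (lexx 1) le_v);
  by rewrite /= ?subKr [X in _ <= X]mulrC.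
Qed.

Definition clamp01 (x : R) : R := if x < 0 then 0 else if 1 < x then 1 else x.

Lemma clamp01_01 x : 0 <= clamp01 x <= 1.
Proof. by rewrite /clamp01; case: (ltrP x 0) => ?; case: (ltrP 1 x) => ?; lra. Qed.

Lemma clamp01_id x : 0 <= x <= 1 -> clamp01 x = x.
Proof. by rewrite /clamp01; case: (ltrP x 0) => ?; case: (ltrP 1 x) => ?; lra. Qed.

Lemma clamp01_le0 x : x <= 0 -> clamp01 x = 0.
Proof. by rewrite /clamp01; case: (ltrP x 0) => ?; case: (ltrP 1 x) => ?; lra. Qed.

Lemma clamp01_ge1 x : 1 <= x -> clamp01 x = 1.
Proof. by rewrite /clamp01; case: (ltrP x 0) => ?; case: (ltrP 1 x) => ?; lra. Qed.

Lemma clamp01_homo : {homo clamp01 : x y / x <= y}.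
Proof.
move=> x y le_xy; rewrite /clamp01.
by case: (ltrP x 0) => ?; case: (ltrP 1 x) => ?;
  case: (ltrP y 0) => ?; case: (ltrP 1 y) => ?; lra.
Qed.

Lemma clamp01_lipschitz {x y} : x <= y -> clamp01 y - clamp01 x <= y - x.
Proof.
move=> le_xy; rewrite /clamp01.
by case: (ltrP x 0) => ?; case: (ltrP 1 x) => ?;
  case: (ltrP y 0) => ?; case: (ltrP 1 y) => ?; lra.
Qed.

Lemma antitone_param_clampN : antitone_param (fun x => clamp01 (- x)) -%R.
Proof.
split=> [x|x y le_xy|u u01|x y]; first exact: clamp01_01.
- by apply: clamp01_homo; rewrite lerN2.
- by rewrite opprK clamp01_id.
- by rewrite lerN2.
Qed.

Lemma antitone_param_clampC :
  antitone_param (fun x => 1 - clamp01 x) (fun u => 1 - u).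
Proof.
split=> [x|x y le_xy|u u01|x y le_xy]; first exact/unit_interval_flip/clamp01_01.
- by rewrite lerB // clamp01_homo.
- by rewrite clamp01_id ?subKr ?unit_interval_flip.
- by rewrite lerB.
Qed.

End TotalPositivity.

Section RealProbability.
Context {d : measure_display} {T : measurableType d} {R : realType}.
Variable P : probability T R.

Definition pr (A : set T) : R := fine (P A).

Lemma prE {A} : measurable A -> P A = (pr A)%:E.
Proof. by move=> mA; rewrite /pr fineK //; exact: fin_num_measure. Qed.

Lemma pr_ge0 A : 0 <= pr A.
Proof. exact/fine_ge0/measure_ge0. Qed.

Lemma pr_le A B : measurable A -> measurable B -> A `<=` B -> pr A <= pr B.
Proof.
move=> mA mB AB; rewrite -lee_fin -(prE mA) -(prE mB).
exact: (le_measure P (mem_set mA) (mem_set mB) AB).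
Qed.

Lemma pr_setT : pr setT = 1.
Proof. by rewrite /pr probability_setT. Qed.

Lemma pr_disjoint_setU A B : measurable A -> measurable B -> A `&` B = set0 ->
  pr (A `|` B) = pr A + pr B.
Proof.
move=> mA mB AB; apply/EFin_inj.
by rewrite EFinD -(prE mA) -(prE mB) -(prE (measurableU _ _ mA mB)) measureU.
Qed.

Lemma pr_setI_null {A Q} : measurable A -> measurable Q -> pr A = 0 ->
  pr (A `&` Q) = 0.
Proof.
move=> mA mQ A0; apply/eqP; rewrite eq_le pr_ge0 andbT -A0.
by apply: pr_le => //; exact: measurableI.
Qed.

Section MeasurableVariable.
Context {X : T -> R}.
Hypothesis mX : measurable_fun setT X.

Lemma measurable_le s : measurable [set t | X t <= s].
Proof. by rewrite -preimage_itvNyc -[_ @^-1` _]setTI; exact: mX. Qed.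

Lemma measurable_lt s : measurable [set t | X t < s].
Proof. by rewrite -preimage_itvNyo -[_ @^-1` _]setTI; exact: mX. Qed.

Lemma measurable_gt s : measurable [set t | s < X t].
Proof. by rewrite -preimage_itvoy -[_ @^-1` _]setTI; exact: mX. Qed.

Lemma measurable_eq s : measurable [set t | X t = s].
Proof.
rewrite (_ : [set t | X t = s] = [set t | X t <= s] `\` [set t | X t < s]).
  exact: measurableD (measurable_le s) (measurable_lt s).
by apply/seteqP; split=> t /=; [move=> ->; lra | case=> ? /negP; rewrite -leNgt; lra].
Qed.

Lemma pr_setI_gt s {Q} : measurable Q ->
  pr ([set t | s < X t] `&` Q) = pr Q - pr ([set t | X t <= s] `&` Q).
Proof.
move=> mQ; apply/eqP; rewrite eq_sym subr_eq -pr_disjoint_setU.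
- apply/eqP; congr pr; apply/seteqP; split=> [t Qt | t [] []] //=.
  by case: (leP (X t) s); [right | left].
- exact: measurableI (measurable_gt s) mQ.
- exact: measurableI (measurable_le s) mQ.
by apply/seteqP; split=> t //= [[? _] [? _]]; lra.
Qed.

Hypothesis unifX : forall u : R, 0 <= u <= 1 -> P [set t | X t <= u] = u%:E.

Lemma pr_le_uniform s : pr [set t | X t <= s] = clamp01 s.
Proof.
have pr01 u : 0 <= u <= 1 -> pr [set t | X t <= u] = u by move=> ?; rewrite /pr unifX.
rewrite /clamp01; case: (ltrP s 0) => [s_lt0|s_ge0].
  apply/eqP; rewrite eq_le pr_ge0 andbT -(pr01 0) ?lexx ?ler01 //.
  by apply: pr_le; [exact: measurable_le..|] => t /=; lra.
case: (ltrP 1 s) => [s_gt1|s_le1]; last by rewrite pr01 ?s_ge0.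
apply/le_anti/andP; split.
  by rewrite -pr_setT; apply: pr_le => //; exact: measurable_le.
rewrite -[X in X <= _](pr01 1) ?lexx ?ler01 //.
by apply: pr_le; [exact: measurable_le..|] => t /=; lra.
Qed.

(* [X = s] lies in [s - e < X <= s], of probability at most e. *)
Lemma pr_eq_uniform s : pr [set t | X t = s] = 0.
Proof.
apply/eqP; rewrite eq_le pr_ge0 andbT; apply/ler_addgt0Pr => e e_gt0.
have le_se : s - e <= s by lra.
rewrite add0r; apply: (@le_trans _ _ (clamp01 s - clamp01 (s - e))); last first.
  by have := clamp01_lipschitz le_se; lra.
have sub_le : [set t | X t <= s - e] `&` [set t | X t <= s] = [set t | X t <= s - e].
  by apply/seteqP; split=> [t [] //|t /= ?]; split=> //; lra.
rewrite -!pr_le_uniform -sub_le -pr_setI_gt; last exact: measurable_le.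
apply: pr_le; [exact: measurable_eq | | by move=> t /= ->; split; lra].
exact: measurableI (measurable_gt _) (measurable_le _).
Qed.

Lemma pr_setI_lt s {Q} : measurable Q ->
  pr ([set t | X t < s] `&` Q) = pr ([set t | X t <= s] `&` Q).
Proof.
move=> mQ.
have split_le : [set t | X t <= s] `&` Q =
    ([set t | X t < s] `&` Q) `|` ([set t | X t = s] `&` Q).
  apply/seteqP; split=> t /=; last by case=> -[? ?]; split=> //; lra.
  by case=> + Qt; rewrite le_eqVlt => /orP[/eqP|]; [right|left].
rewrite split_le pr_disjoint_setU.
- by rewrite (pr_setI_null (measurable_eq s)) ?pr_eq_uniform ?addr0.
- exact: measurableI (measurable_lt s) mQ.
- exact: measurableI (measurable_eq s) mQ.
by apply/seteqP; split=> t //= [[lt_s _] [eq_s _]]; rewrite eq_s ltxx in lt_s.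
Qed.

Lemma pr_lt_uniform s : pr [set t | X t < s] = clamp01 s.
Proof. by rewrite -[X in pr X]setIT pr_setI_lt // setIT pr_le_uniform. Qed.

Lemma pr_setI_le_clamp s {Q} : measurable Q ->
  pr ([set t | X t <= s] `&` Q) = pr ([set t | X t <= clamp01 s] `&` Q).
Proof.
move=> mQ.
have below a : a <= 0 -> pr ([set t | X t <= a] `&` Q) = 0.
  move=> a_le0; apply: pr_setI_null => //; first exact: measurable_le.
  by rewrite pr_le_uniform clamp01_le0.
have above a : 1 <= a -> pr ([set t | X t <= a] `&` Q) = pr Q.
  move=> a_ge1; apply/eqP; rewrite eq_sym -subr_eq0 -pr_setI_gt //; apply/eqP.
  apply: pr_setI_null => //; first exact: measurable_gt.
  rewrite -[X in pr X]setIT pr_setI_gt // setIT pr_setT.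
  by rewrite pr_le_uniform clamp01_ge1 ?subrr.
case: (lerP s 0) => [s_le0|s_gt0]; first by rewrite !below ?clamp01_le0.
case: (lerP 1 s) => [s_ge1|s_lt1]; first by rewrite !above ?clamp01_ge1.
by rewrite clamp01_id // !ltW.
Qed.

End MeasurableVariable.

Section UpperEvents.
Variables X1 X2 : T -> R.
Hypotheses (mX1 : measurable_fun setT X1) (mX2 : measurable_fun setT X2).

Definition upper_prob (a1 a2 x1 x2 : R) := pr (upper_event X1 X2 a1 a2 x1 x2).

Lemma measurable_upper_event a1 a2 x1 x2 :
  measurable (upper_event X1 X2 a1 a2 x1 x2).
Proof.
apply: measurableI; apply: measurable_gt;
  exact: measurable_realfun.measurable_funM (measurable_cst _) _.
Qed.

Lemma setI_upper_event a1 a2 x1 x2 y1 y2 :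
  upper_event X1 X2 a1 a2 x1 x2 `&` upper_event X1 X2 a1 a2 y1 y2 =
  upper_event X1 X2 a1 a2 (Num.max x1 y1) (Num.max x2 y2).
Proof.
apply/seteqP; split=> t; rewrite /upper_event /= !gt_max.
  by case=> -[-> ->] [-> ->].
by case=> /andP[? ?] /andP[? ?].
Qed.

Lemma increasing_dir_tp2 a1 a2 :
  increasing_dir P X1 X2 a1 a2 <-> tp2 (upper_prob a1 a2).
Proof.
have ge0 x1 x2 : 0 <= upper_prob a1 a2 x1 x2 by exact: pr_ge0.
have anti x1 x2 y1 y2 : x1 <= y1 -> x2 <= y2 ->
    upper_prob a1 a2 y1 y2 <= upper_prob a1 a2 x1 x2.
  move=> le1 le2; apply: pr_le; try exact: measurable_upper_event.
  by move=> t [? ?]; split; [exact: le_lt_trans le1 _ | exact: le_lt_trans le2 _].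
suff -> : increasing_dir P X1 X2 a1 a2 <-> ratio_nondecreasing (upper_prob a1 a2).
  by split; [exact: ratio_nondecreasing_tp2 | exact: tp2_ratio_nondecreasing].
by split=> h x1 x2 y1 y2 z1 z2 le1 le2; have := h x1 x2 y1 y2 z1 z2 le1 le2;
  rewrite /upper_prob /pr !setI_upper_event.
Qed.

End UpperEvents.

End RealProbability.

Section UniformPair.
Context {d : measure_display} {T : measurableType d} {R : realType}.
Variables (P : probability T R) (U V : T -> R) (C : R -> R -> R).
Hypotheses (mU : measurable_fun setT U) (mV : measurable_fun setT V).
Hypothesis unifU : forall u : R, 0 <= u <= 1 -> P [set t | U t <= u] = u%:E.
Hypothesis unifV : forall v : R, 0 <= v <= 1 -> P [set t | V t <= v] = v%:E.
Hypothesis dfC : forall u v : R, 0 <= u <= 1 -> 0 <= v <= 1 ->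
  P [set t | U t <= u /\ V t <= v] = (C u v)%:E.

Lemma pr_joint_le s s' :
  pr P ([set t | U t <= s] `&` [set t | V t <= s']) = C (clamp01 s) (clamp01 s').
Proof.
rewrite (pr_setI_le_clamp P mU unifU _ (measurable_le mV s')) setIC.
rewrite (pr_setI_le_clamp P mV unifV _ (measurable_le mU _)) setIC.
by rewrite /pr dfC ?clamp01_01.
Qed.

Lemma pr_joint_lt s s' :
  pr P ([set t | U t < s] `&` [set t | V t < s']) = C (clamp01 s) (clamp01 s').
Proof.
rewrite (pr_setI_lt P mU unifU _ (measurable_lt mV s')) setIC.
by rewrite (pr_setI_lt P mV unifV _ (measurable_le mU s)) setIC pr_joint_le.
Qed.

Lemma upper_probNN x1 x2 :
  upper_prob P U V (-1) (-1) x1 x2 = C (clamp01 (- x1)) (clamp01 (- x2)).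
Proof.
rewrite /upper_prob -pr_joint_lt; congr pr.
by apply/seteqP; split=> t /= [? ?]; split; lra.
Qed.

Lemma upper_probPN x1 x2 :
  upper_prob P U V 1 (-1) x1 x2 = clamp01 (- x2) - C (clamp01 x1) (clamp01 (- x2)).
Proof.
rewrite /upper_prob (_ : upper_event _ _ _ _ _ _ =
    [set t | x1 < U t] `&` [set t | V t < - x2]); last first.
  by apply/seteqP; split=> t /= [? ?]; split; lra.
rewrite (pr_setI_gt P mU _ (measurable_lt mV _)) (pr_lt_uniform P mV unifV).
by rewrite setIC (pr_setI_lt P mV unifV _ (measurable_le mU x1)) setIC pr_joint_le.
Qed.

Lemma upper_probNP x1 x2 :
  upper_prob P U V (-1) 1 x1 x2 = clamp01 (- x1) - C (clamp01 (- x1)) (clamp01 x2).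
Proof.
rewrite /upper_prob (_ : upper_event _ _ _ _ _ _ =
    [set t | x2 < V t] `&` [set t | U t < - x1]); last first.
  by apply/seteqP; split=> t /= [? ?]; split; lra.
rewrite (pr_setI_gt P mV _ (measurable_lt mU _)) (pr_lt_uniform P mU unifU).
by rewrite setIC (pr_setI_lt P mU unifU _ (measurable_le mV x2)) pr_joint_le.
Qed.

Lemma upper_probPP x1 x2 :
  upper_prob P U V 1 1 x1 x2 = 1 - clamp01 x1 - clamp01 x2 + C (clamp01 x1) (clamp01 x2).
Proof.
rewrite /upper_prob (_ : upper_event _ _ _ _ _ _ =
    [set t | x1 < U t] `&` [set t | x2 < V t]); last first.
  by apply/seteqP; split=> t /= [? ?]; split; lra.
rewrite (pr_setI_gt P mU _ (measurable_gt mV _)) setIC.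
rewrite (pr_setI_gt P mV _ (measurable_le mU _)) -[[set t | x2 < V t]]setIT.
rewrite (pr_setI_gt P mV _ measurableT) setIT pr_setT.
rewrite (pr_le_uniform P mU unifU) (pr_le_uniform P mV unifV) setIC pr_joint_le.
by lra.
Qed.

Lemma increasing_dirNN : increasing_dir P U V (-1) (-1) <-> tp2_01 C.
Proof.
rewrite increasing_dir_tp2 //.
exact: tp2_reparam upper_probNN antitone_param_clampN antitone_param_clampN.
Qed.

Lemma increasing_dirPN :
  increasing_dir P U V 1 (-1) <-> rr2_01 (fun u v => v - C u v).
Proof.
rewrite increasing_dir_tp2 // -tp2_01_flipl.
apply: tp2_reparam antitone_param_clampC antitone_param_clampN => x1 x2.
by rewrite upper_probPN /= subKr.
Qed.

Lemma increasing_dirNP :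
  increasing_dir P U V (-1) 1 <-> rr2_01 (fun u v => u - C u v).
Proof.
rewrite increasing_dir_tp2 // -tp2_01_flipr.
apply: tp2_reparam antitone_param_clampN antitone_param_clampC => x1 x2.
by rewrite upper_probNP /= subKr.
Qed.

Lemma increasing_dirPP : increasing_dir P U V 1 1 <-> tp2_01 (survival_copula C).
Proof.
rewrite increasing_dir_tp2 //.
apply: tp2_reparam antitone_param_clampC antitone_param_clampC => x1 x2.
by rewrite upper_probPP /survival_copula !subKr; lra.
Qed.

End UniformPair.

Theorem theorem3p1 (d : measure_display) (T : measurableType d) (R : realType)
  (P : probability T R) (U V : T -> R) (C : R -> R -> R)
  (mU : measurable_fun setT U) (mV : measurable_fun setT V)
  (unifU : forall u : R, 0 <= u <= 1 -> P [set t | U t <= u] = u%:E)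
  (unifV : forall v : R, 0 <= v <= 1 -> P [set t | V t <= v] = v%:E)
  (dfC : forall u v : R, 0 <= u <= 1 -> 0 <= v <= 1 ->
         P [set t | U t <= u /\ V t <= v] = (C u v)%:E) :
  (increasing_dir P U V (-1) (-1) <->
     (forall u v u' v' : R, 0 <= u <= 1 -> 0 <= v <= 1 ->
        0 <= u' <= 1 -> 0 <= v' <= 1 -> u <= u' -> v <= v' ->
        C u v' * C u' v <= C u v * C u' v'))
  /\
  (increasing_dir P U V 1 (-1) <->
     (forall u v u' v' : R, 0 <= u <= 1 -> 0 <= v <= 1 ->
        0 <= u' <= 1 -> 0 <= v' <= 1 -> u <= u' -> v <= v' ->
        (v - C u v) * (v' - C u' v') <= (v - C u' v) * (v' - C u v')))
  /\
  (increasing_dir P U V (-1) 1 <->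
     (forall u v u' v' : R, 0 <= u <= 1 -> 0 <= v <= 1 ->
        0 <= u' <= 1 -> 0 <= v' <= 1 -> u <= u' -> v <= v' ->
        (u - C u v) * (u' - C u' v') <= (u' - C u' v) * (u - C u v')))
  /\
  (increasing_dir P U V 1 1 <->
     (forall u v u' v' : R, 0 <= u <= 1 -> 0 <= v <= 1 ->
        0 <= u' <= 1 -> 0 <= v' <= 1 -> u <= u' -> v <= v' ->
        survival_copula C u v' * survival_copula C u' v
          <= survival_copula C u v * survival_copula C u' v')).
Proof.
split; first exact: increasing_dirNN mU mV unifU unifV dfC.
split; first exact: increasing_dirPN mU mV unifU unifV dfC.
split; first exact: increasing_dirNP mU mV unifU unifV dfC.
exact: increasing_dirPP mU mV unifU unifV dfC.
Qed.
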